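(* Let $k$ be a field of characteristic zero, let $n\ge 1$ and $R=k[x_1,\ldots,x_n]$. Let $\mathfrak{D}$ be a set of pairwise commuting $k$-derivations of $R$ such that $R$ is $\mathfrak{D}$-simple and $\partial_{x_1},\ldots,\partial_{x_{n-1}}\in\mathfrak{D}$, and assume the Jacobian Conjecture holds in $n$ variables over $k$. Then there exists $d\in\mathfrak{D}$ such that $\{\partial_{x_1},\ldots,\partial_{x_{n-1}},d\}$ is a locally nilpotent commutative basis of the $R$-module $\mathrm{Der}_k(R)$. In particular, $d$ is locally nilpotent.
   Context: $\mathrm{Der}_k(R)$ is the (free) $R$-module of all $k$-derivations of $R$ (i.e. $k$-linear maps satisfying the Leibniz rule). A commutative basis of $\mathrm{Der}_k(R)$ is an $R$-basis consisting of pairwise commuting derivations; it is locally nilpotent if each of its elements $d$ is locally nilpotent, i.e. for every $f\in R$ there is $m\ge 1$ with $d^m(f)=0$. $R$ is $\mathfrak{D}$-simple if its only ideals $I$ with $d(I)\subseteq I$ for all $d\in\mathfrak{D}$ are $0$ and $R$. The Jacobian Conjecture in $n$ variables over $k$ asserts: if $F=(F_1,\ldots,F_n)\in k[x_1,\ldots,x_n]^n$ has Jacobian matrix $(\partial F_i/\partial x_j)$ invertible over $k[x_1,\ldots,x_n]$, then $F$ has a polynomial inverse. *)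

From HB Require Import structures.
From mathcomp Require Import all_boot all_order all_algebra.
From mathcomp Require Import mpoly.
Set Implicit Arguments. Unset Strict Implicit. Unset Printing Implicit Defensive.
Import Order.TTheory GRing.Theory.
Local Open Scope ring_scope.

(* R = k[x_1,...,x_n] is {mpoly k[n]}; variable x_{i+1} is 'X_i, i : 'I_n. *)

Definition is_kderivation (k : fieldType) (n : nat)
    (f : {mpoly k[n]} -> {mpoly k[n]}) : Prop :=
  (forall (a : k) (p q : {mpoly k[n]}), f (a *: p + q) = a *: f p + f q) /\
  (forall p q : {mpoly k[n]}, f (p * q) = p * f q + f p * q).

Definition locally_nilpotent (k : fieldType) (n : nat)
    (f : {mpoly k[n]} -> {mpoly k[n]}) : Prop :=
  forall p : {mpoly k[n]}, exists m : nat, (0 < m)%N /\ iter m f p = 0.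

Definition is_ideal (k : fieldType) (n : nat) (I : {mpoly k[n]} -> Prop) : Prop :=
  I 0 /\ (forall p q, I p -> I q -> I (p + q)) /\ (forall r p, I p -> I (r * p)).

Definition D_simple (k : fieldType) (n : nat)
    (D : ({mpoly k[n]} -> {mpoly k[n]}) -> Prop) : Prop :=
  forall I : {mpoly k[n]} -> Prop, is_ideal I ->
    (forall d, D d -> forall p, I p -> I (d p)) ->
    (forall p, I p <-> p = 0) \/ (forall p, I p).

Definition commute_maps (k : fieldType) (n : nat)
    (d1 d2 : {mpoly k[n]} -> {mpoly k[n]}) : Prop :=
  forall p, d1 (d2 p) = d2 (d1 p).

Definition is_Der_basis (k : fieldType) (n : nat) (I : finType)
    (b : I -> {mpoly k[n]} -> {mpoly k[n]}) : Prop :=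
  (forall i, is_kderivation (b i)) /\
  (forall delta, is_kderivation delta ->
     exists c : I -> {mpoly k[n]}, forall p, delta p = \sum_(i : I) c i * b i p) /\
  (forall c : I -> {mpoly k[n]},
     (forall p, \sum_(i : I) c i * b i p = 0) -> forall i, c i = 0).

Definition is_LN_comm_Der_basis (k : fieldType) (n : nat) (I : finType)
    (b : I -> {mpoly k[n]} -> {mpoly k[n]}) : Prop :=
  is_Der_basis b /\ (forall i j, commute_maps (b i) (b j)) /\
  (forall i, locally_nilpotent (b i)).

Definition jacobian (k : fieldType) (n : nat) (F : n.-tuple {mpoly k[n]})
  : 'M[{mpoly k[n]}]_n := \matrix_(i < n, j < n) mderiv j (tnth F i).

Definition JacobianConjecture (k : fieldType) (n : nat) : Prop :=
  forall F : n.-tuple {mpoly k[n]},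
    (exists M : 'M[{mpoly k[n]}]_n,
        jacobian F *m M = 1%:M /\ M *m jacobian F = 1%:M) ->
    exists G : n.-tuple {mpoly k[n]},
      forall i : 'I_n, comp_mpoly G (tnth F i) = 'X_i /\
                       comp_mpoly F (tnth G i) = 'X_i.

Definition partials_then (k : fieldType) (n : nat)
    (d : {mpoly k[n]} -> {mpoly k[n]}) (i : 'I_n) : {mpoly k[n]} -> {mpoly k[n]} :=
  if (val i < n.-1)%N then mderiv i else d.

From HB Require Import structures.
From mathcomp Require Import all_boot all_order all_algebra.
From mathcomp Require Import mpoly.
From mathcomp Require Import ring.
From Stdlib Require Import Classical.
Import GRing.Theory.
Set Implicit Arguments. Unset Strict Implicit.
Local Open Scope ring_scope.

(* Write y := x_l for the variable whose partial derivative is missing from D.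
   Every d in D commutes with the other partials, so d(x_j) lies in k[y] for
   all j.  The ideal y R would be D-stable if D killed y, so some d in D has
   d(y) <> 0; for that d the principal ideal d(y) R is D-stable, hence d(y) is
   a unit, i.e. a nonzero constant c.  Then d = c ∂_y + Σ_{i<>l} d(x_i) ∂_i,
   which makes {∂_i (i <> l), d} a basis of Der_k(R), and d acts on k[y] as
   c ∂_y, so it is locally nilpotent on the generators, hence everywhere. *)

Section Derivations.

Variables (k : fieldType) (n : nat).
Implicit Types (p q : {mpoly k[n]}) (d : {mpoly k[n]} -> {mpoly k[n]}).

Lemma mderiv_kder (i : 'I_n) : is_kderivation (@mderiv n k i).
Proof.
split; first by move=> a p q; rewrite mderivD mderivZ.
by move=> p q; rewrite mderivM addrC.
Qed.

Lemma mderivXU (i j : 'I_n) : mderiv i ('X_j : {mpoly k[n]}) = (j == i)%:R.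
Proof.
rewrite mderivX mnm1E; case: eqP => [->|_]; last by rewrite scale0r.
have -> : (U_(i) - U_(i) = 0)%MM by apply/mnmP => m; rewrite mnmBE subnn mnm0E.
by rewrite mpolyX0 scale1r.
Qed.

Lemma mpoly_alg_ind (P : {mpoly k[n]} -> Prop) :
  P 1 -> (forall i, P 'X_i) -> (forall p q, P p -> P q -> P (p * q)) ->
  (forall c p q, P p -> P q -> P (c *: p + q)) -> forall p, P p.
Proof.
move=> P1 PX PM PL.
have P0 : P 0 by rewrite -(addNr 1) -scaleN1r; apply: PL.
have PXm m : P 'X_[m].
  rewrite mpolyXE_id; apply: big_ind => // i _.
  by elim: (m i) => [|e IH]; rewrite ?expr0 // exprS; apply: PM.
by elim/mpolyind => // c m p _ _ Pp; apply: PL.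
Qed.

Section OneDerivation.

Variable d : {mpoly k[n]} -> {mpoly k[n]}.
Hypothesis hd : is_kderivation d.

Lemma kderD p q : d (p + q) = d p + d q.
Proof. by have := hd.1 1 p q; rewrite !scale1r. Qed.

Lemma kder0 : d 0 = 0.
Proof. by apply: (@addrI _ (d 0)); rewrite -kderD !addr0. Qed.

Lemma kderZ c p : d (c *: p) = c *: d p.
Proof. by rewrite -[c *: p]addr0 hd.1 kder0 addr0. Qed.

Lemma kder1 : d 1 = 0.
Proof.
have := hd.2 1 1; rewrite !mulr1 mul1r => h.
by apply: (@addrI _ (d 1)); rewrite addr0 -h.
Qed.

Lemma kder_chain p : d p = \sum_i d 'X_i * mderiv i p.
Proof.
elim/mpoly_alg_ind: p.
- by rewrite kder1 big1 // => i _; rewrite -mpolyC1 mderivC mulr0.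
- move=> j; rewrite (bigD1 j) //= mderivXU eqxx mulr1 big1 ?addr0 // => i.
  by rewrite mderivXU eq_sym => /negbTE ->; rewrite mulr0.
- move=> p q hp hq; rewrite hd.2 hp hq mulr_sumr mulr_suml -big_split /=.
  by apply: eq_bigr => i _; rewrite mderivM; ring.
- move=> c p q hp hq; rewrite hd.1 hp hq scaler_sumr -big_split /=.
  by apply: eq_bigr => i _; rewrite mderivD mderivZ mulrDr scalerAr.
Qed.

Lemma kder_iter0 m : iter m d 0 = 0.
Proof. by elim: m => //= m ->; rewrite kder0. Qed.

Lemma kder_iter_lin m c p q :
  iter m d (c *: p + q) = c *: iter m d p + iter m d q.
Proof. by elim: m => //= m IH in p q *; rewrite IH hd.1. Qed.

Lemma kder_iterD m p q : iter m d (p + q) = iter m d p + iter m d q.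
Proof. by have := kder_iter_lin m 1 p q; rewrite !scale1r. Qed.

Lemma kder_iter_eq0_leq e m p : (e <= m)%N -> iter e d p = 0 -> iter m d p = 0.
Proof. by move=> le_em he; rewrite -(subnK le_em) iterD he kder_iter0. Qed.

Lemma kder_iterM_eq0 a b p q :
  iter a d p = 0 -> iter b d q = 0 -> iter (a + b) d (p * q) = 0.
Proof.
elim: a => [|a IHa] in b p q *.
  by rewrite [iter 0 d p]/= => ->; rewrite mul0r kder_iter0.
elim: b => [|b IHb] in p q * => hp.
  by rewrite [iter 0 d q]/= => ->; rewrite mulr0 kder_iter0.
move=> hq; have hp' : iter a d (d p) = 0 by rewrite -iterSr.
have hq' : iter b d (d q) = 0 by rewrite -iterSr.
by rewrite addnS iterSr hd.2 kder_iterD IHb // add0r addSnnS IHa.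
Qed.

Lemma kder_nilpotent_gens :
  (forall i, exists m, iter m d 'X_i = 0) -> forall p, exists m, iter m d p = 0.
Proof.
move=> hX; elim/mpoly_alg_ind => //.
- by exists 1%N; rewrite /= kder1.
- by move=> p q [a ha] [b hb]; exists (a + b)%N; apply: kder_iterM_eq0.
- move=> c p q [a ha] [b hb]; exists (maxn a b).
  rewrite kder_iter_lin (kder_iter_eq0_leq (leq_maxl a b) ha).
  by rewrite (kder_iter_eq0_leq (leq_maxr a b) hb) scaler0 addr0.
Qed.

Lemma kder_locally_nilpotent :
  (forall p, exists m, iter m d p = 0) -> locally_nilpotent d.
Proof. by move=> h p; have [m hm] := h p; exists m.+1; rewrite iterS hm kder0. Qed.

End OneDerivation.

Lemma mderiv_nilpotent (i : 'I_n) p : exists m, iter m (mderiv i) p = 0.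
Proof.
apply: kder_nilpotent_gens p; first exact: mderiv_kder.
move=> j; exists 2%N => /=; rewrite mderivXU.
by case: (j == i); rewrite -?mpolyC1 ?mderivC ?mderiv0.
Qed.

Lemma mderiv_locally_nilpotent (i : 'I_n) : locally_nilpotent (@mderiv n k i).
Proof. exact/kder_locally_nilpotent/mderiv_nilpotent/mderiv_kder. Qed.

Lemma mpoly_unit_const p : p \is a GRing.unit -> p = (p@_0)%:MP.
Proof. by case/andP => /eqP. Qed.

Lemma mpolyX_neq0 (l : 'I_n) : ('X_l : {mpoly k[n]}) != 0.
Proof.
apply/eqP => /(congr1 (mderiv l)).
by rewrite mderivXU eqxx mderiv0 => /eqP; rewrite oner_eq0.
Qed.

Lemma mpolyX_nonunit (l : 'I_n) : ('X_l : {mpoly k[n]}) \isn't a GRing.unit.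
Proof.
apply/negP => /mpoly_unit_const /(congr1 (mderiv l)).
by rewrite mderivXU eqxx mderivC => /eqP; rewrite oner_eq0.
Qed.

End Derivations.

Section PrincipalIdeal.

Variables (k : fieldType) (n : nat) (D : ({mpoly k[n]} -> {mpoly k[n]}) -> Prop).
Hypothesis Dder : forall d, D d -> is_kderivation d.
Hypothesis Dsimple : D_simple D.

Lemma D_simple_principal (a : {mpoly k[n]}) :
  (forall d, D d -> exists s, d a = a * s) -> a = 0 \/ a \is a GRing.unit.
Proof.
move=> Da; pose I p := exists r, p = a * r.
have I_ideal : is_ideal I.
  split; first by exists 0; rewrite mulr0.
  split; first by move=> _ _ [r ->] [s ->]; exists (r + s); rewrite mulrDr.
  by move=> r _ [s ->]; exists (r * s); rewrite mulrCA.
have I_stable d : D d -> forall p, I p -> I (d p).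
  move=> Dd _ [r ->]; have [s ds] := Da d Dd.
  by exists (d r + s * r); rewrite (Dder Dd).2 ds; ring.
have [I0|I1] := Dsimple I_ideal I_stable.
- by left; apply/I0; exists 1; rewrite mulr1.
- by right; have [r hr] := I1 1; apply/unitrP; exists r; rewrite mulrC -hr.
Qed.

Lemma D_exists_image_X_neq0 (l : 'I_n) : exists d, D d /\ d 'X_l != 0.
Proof.
apply: NNPP => none.
have Dkill d : D d -> d 'X_l = 0.
  by move=> Dd; apply/eqP; apply: contraT => nz; case: none; exists d.
have Dstable d : D d -> exists s, d 'X_l = 'X_l * s.
  by move=> Dd; exists 0; rewrite Dkill // mulr0.
have [X0|Xu] := D_simple_principal Dstable.
- by have := mpolyX_neq0 k l; rewrite X0 eqxx.
- by have := mpolyX_nonunit k l; rewrite Xu.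
Qed.

End PrincipalIdeal.

Section UnivariateIn.

Variables (k : fieldType) (n : nat) (l : 'I_n).

Definition univariate_in (f : {mpoly k[n]}) := forall i, i != l -> mderiv i f = 0.

Lemma kder_univariate (e : {mpoly k[n]} -> {mpoly k[n]}) f :
  is_kderivation e -> univariate_in f -> e f = e 'X_l * mderiv l f.
Proof.
move=> he hf; rewrite (kder_chain he) (bigD1 l) //= big1 ?addr0 // => i il.
by rewrite hf // mulr0.
Qed.

Lemma univariate_iter_mderiv m f :
  univariate_in f -> univariate_in (iter m (mderiv l) f).
Proof. by elim: m => //= m IH hf i il; rewrite mderiv_comm IH // mderiv0. Qed.

Lemma kder_iter_univariate (e : {mpoly k[n]} -> {mpoly k[n]}) c m f :
  is_kderivation e -> e 'X_l = c%:MP -> univariate_in f ->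
  iter m e f = c ^+ m *: iter m (mderiv l) f.
Proof.
move=> he eX hf; elim: m => [|m IH]; first by rewrite scale1r.
rewrite !iterS IH (kderZ he) (kder_univariate (f := iter m _ f) he).
  by rewrite eX mul_mpolyC scalerA exprSr.
exact: univariate_iter_mderiv.
Qed.

Lemma kder_nilpotent_univariate_image (e : {mpoly k[n]} -> {mpoly k[n]}) c :
  is_kderivation e -> e 'X_l = c%:MP -> (forall j, univariate_in (e 'X_j)) ->
  locally_nilpotent e.
Proof.
move=> he eX eXj; apply/(kder_locally_nilpotent he)/(kder_nilpotent_gens he) => j.
have [m hm] := mderiv_nilpotent l (e 'X_j).
by exists m.+1; rewrite iterSr (kder_iter_univariate _ he eX) ?hm ?scaler0.
Qed.

Lemma replace_partial_Der_basis (e : {mpoly k[n]} -> {mpoly k[n]})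
    (b : 'I_n -> {mpoly k[n]} -> {mpoly k[n]}) :
  is_kderivation e -> e 'X_l \is a GRing.unit ->
  (forall i, b i = if i == l then e else mderiv i) -> is_Der_basis b.
Proof.
move=> he ue bE; split; [|split].
- by move=> i; rewrite bE; case: ifP => _; [exact: he | exact: mderiv_kder].
- move=> de hde; pose u := de 'X_l / e 'X_l.
  exists (fun i => if i == l then u else de 'X_i - u * e 'X_i) => p.
  rewrite [RHS](bigD1 l) //= bE eqxx (kder_chain he p) [in RHS](bigD1 l) //=.
  rewrite (kder_chain hde p) (bigD1 l) //= mulrDr -addrA; congr (_ + _).
    by rewrite mulrA /u divrK.
  rewrite mulr_sumr -big_split /=; apply: eq_bigr => i /negbTE il.
  by rewrite bE il; ring.
- move=> c hc i.
  have cl : c l = 0.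
    have := hc 'X_l; rewrite (bigD1 l) //= bE eqxx big1 ?addr0; last first.
      by move=> j /negbTE jl; rewrite bE jl mderivXU eq_sym jl mulr0.
    by move/(congr1 (fun x => x / e 'X_l)); rewrite mulrK // mul0r.
  have [-> //|il] := eqVneq i l.
  have := hc 'X_i; rewrite (bigD1 l) //= bE eqxx cl mul0r add0r.
  rewrite (bigD1 i il) /= bE (negbTE il) mderivXU eqxx mulr1 big1 ?addr0 //.
  by move=> j /andP[jl ji]; rewrite bE (negbTE jl) mderivXU eq_sym (negbTE ji) mulr0.
Qed.

End UnivariateIn.

Section CommutingPartials.

Variables (k : fieldType) (n : nat) (D : ({mpoly k[n]} -> {mpoly k[n]}) -> Prop).
Variable l : 'I_n.
Hypothesis Dder : forall d, D d -> is_kderivation d.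
Hypothesis Dcomm : forall d1 d2, D d1 -> D d2 -> commute_maps d1 d2.
Hypothesis Dsimple : D_simple D.
Hypothesis Dpartial : forall i, i != l -> D (mderiv i).

Lemma D_univariate_image d j : D d -> univariate_in l (d 'X_j).
Proof.
move=> Dd i il; rewrite (Dcomm (Dpartial il) Dd) mderivXU.
by case: (j == i); rewrite ?(kder1 (Dder Dd)) ?(kder0 (Dder Dd)).
Qed.

Lemma D_image_X_unit d : D d -> d 'X_l != 0 -> d 'X_l \is a GRing.unit.
Proof.
move=> Dd nz.
have Dstable d' : D d' -> exists s, d' (d 'X_l) = d 'X_l * s.
  move=> Dd'; exists (mderiv l (d' 'X_l)).
  rewrite (Dcomm Dd' Dd) (kder_univariate (l := l) (Dder Dd)) //.
  exact: D_univariate_image Dd'.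
by have [dX0|//] := D_simple_principal Dder Dsimple Dstable; rewrite dX0 eqxx in nz.
Qed.

End CommutingPartials.

Theorem corollary2p8 (k : fieldType) (n : nat)
    (D : ({mpoly k[n]} -> {mpoly k[n]}) -> Prop) :
  [pchar k] =i pred0 ->
  (0 < n)%N ->
  (forall d, D d -> is_kderivation d) ->
  (forall d1 d2, D d1 -> D d2 -> commute_maps d1 d2) ->
  D_simple D ->
  (forall i : 'I_n, (val i < n.-1)%N -> D (mderiv i)) ->
  JacobianConjecture k n ->
  exists d, D d /\ is_LN_comm_Der_basis (partials_then d) /\ locally_nilpotent d.
Proof.
move=> _ n_gt0 Dder Dcomm Dsimple Dpartial _.
pose l : 'I_n := Ordinal (etrans (ltn_predL n) n_gt0).
have ltn_l (i : 'I_n) : (val i < n.-1)%N = (i != l).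
  by rewrite -(inj_eq val_inj) ltn_neqAle -ltnS prednK // ltn_ord andbT.
have Dpartial_l i : i != l -> D (mderiv i) by rewrite -ltn_l; apply: Dpartial.
have [d [Dd dX_neq0]] := D_exists_image_X_neq0 Dder Dsimple l.
have ud := D_image_X_unit Dder Dcomm Dsimple Dpartial_l Dd dX_neq0.
have bE i : partials_then d i = if i == l then d else mderiv i.
  by rewrite /partials_then ltn_l; case: (i == l).
have lnd : locally_nilpotent d.
  apply: (kder_nilpotent_univariate_image (Dder _ Dd) (mpoly_unit_const ud)) => j.
  exact: D_univariate_image Dder Dcomm Dpartial_l _ _ Dd.
exists d; split => //; split => //; split; [|split].
- exact: replace_partial_Der_basis (Dder _ Dd) ud bE.
- move=> i j p; rewrite !bE.
  case: eqP => [_|/eqP il]; case: eqP => [_|/eqP jl] //; last exact: mderiv_comm.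
  + exact: Dcomm _ _ Dd (Dpartial_l j jl) p.
  + exact: Dcomm _ _ (Dpartial_l i il) Dd p.
- by move=> i; rewrite bE; case: eqP => // _; apply: mderiv_locally_nilpotent.
Qed.
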